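(* Let $\lambda=(\lambda_1,\dots,\lambda_n)\in\mathbb{R}^n$ with $\lambda_1+\dots+\lambda_n>0$, and suppose there is no partition $\{I_1,I_2\}$ of $\{1,\dots,n\}$ with $s_{I_1}(\lambda)>0$ and $s_{I_2}(\lambda)>0$. Then $|\mathfrak{S}(\lambda)|=(n-1)!$.
   Context: $s_J(\lambda)=\sum_{i\in J}\lambda_i$. $\mathfrak{S}_n$ acts on $\mathbb{R}^n$ by $\sigma(\lambda)=(\lambda_{\sigma^{-1}(1)},\dots,\lambda_{\sigma^{-1}(n)})$. For $\mu\in\mathbb{R}^n$, $\mu>0$ means $\mu_1+\dots+\mu_i>0$ for all $i$. $\mathfrak{S}(\lambda)=\{\sigma\in\mathfrak{S}_n:\sigma(\lambda)>0\}$. *)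

From mathcomp Require Import all_boot all_order all_algebra all_fingroup.
Set Implicit Arguments. Unset Strict Implicit. Unset Printing Implicit Defensive.
Import Order.TTheory GRing.Theory Num.Theory.
Local Open Scope ring_scope.

(* Indices {1,...,n} are represented by 'I_n = {0,...,n-1}. *)

Definition sJ (R : realFieldType) (n : nat) (J : {set 'I_n}) (lam : 'I_n -> R) : R :=
  \sum_(i in J) lam i.

Definition perm_act (R : realFieldType) (n : nat) (s : 'S_n) (lam : 'I_n -> R) : 'I_n -> R :=
  fun i => lam ((s^-1)%g i).

Definition pos_vec (R : realFieldType) (n : nat) (mu : 'I_n -> R) : bool :=
  [forall i : 'I_n, 0 < \sum_(j < n | (j <= i)%N) mu j].

Definition Sgood (R : realFieldType) (n : nat) (lam : 'I_n -> R) : {set 'S_n} :=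
  [set s : 'S_n | pos_vec (perm_act s lam)].

From mathcomp Require Import all_boot all_order all_algebra all_fingroup.
From mathcomp Require Import lra zify.
Set Implicit Arguments. Unset Strict Implicit. Unset Printing Implicit Defensive.
Import Order.TTheory GRing.Theory Num.Theory.
Local Open Scope ring_scope.

(* Among the n cyclic rotations of any arrangement of lambda, the one starting
   right after the last minimum of the prefix sums has all partial sums
   positive.  If two distinct rotations were positive, the two arcs of the
   cycle between their starting points would both have positive sum, which is
   a forbidden partition.  Hence the positive arrangements meet every left
   coset of the cyclic group of rotations of S_n exactly once, and there are
   n!/n of them. *)

Lemma exists_last_argmin d (T : orderType d) (F : nat -> T) (N : nat) :
  exists2 k, (k <= N)%N &
    (forall i, (i <= N)%N -> (F k <= F i)%O) /\
    (forall i, (k < i <= N)%N -> (F k < F i)%O).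
Proof.
elim: N => [|N [k kN [minF lastF]]].
  by exists 0%N => //; split=> [i|i]; [rewrite leqn0 => /eqP -> | lia].
have [leFk | ltkF] := leP (F N.+1) (F k).
- exists N.+1 => //; split=> [i|i]; last by lia.
  rewrite leq_eqVlt => /orP [/eqP -> //|iN].
  exact: le_trans leFk (minF _ iN).
- exists k; first exact: leqW.
  split=> [i|i /andP[ki]]; rewrite leq_eqVlt => /orP [/eqP -> //|iN].
  + exact: ltW.
  + exact: minF.
  + by apply: lastF; rewrite ki.
Qed.

Lemma eq_pos_vec (R : realFieldType) n (f g : 'I_n -> R) :
  f =1 g -> pos_vec f = pos_vec g.
Proof.
by move=> fg; apply: eq_forallb => i; congr (0 < _); apply: eq_bigr => j _.
Qed.

Definition splittable (R : realFieldType) n (lam : 'I_n -> R) : Prop :=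
  exists J : {set 'I_n}, 0 < sJ J lam /\ 0 < sJ (~: J) lam.

Section CycleLemma.
Variables (R : realFieldType) (m : nat) (mu : 'I_m.+1 -> R).
Local Notation n := m.+1.

(* Prefix sums of the n-periodic extension of mu. *)
Definition psum (t : nat) : R := \sum_(j < t) mu (inZp j).

Lemma psum_ord (t : nat) : (t <= n)%N -> psum t = \sum_(i < n | (i < t)%N) mu i.
Proof.
move=> tn; rewrite /psum (big_ord_widen _ (fun j => mu (inZp j)) tn).
by apply: eq_bigr => i _; rewrite valZpK.
Qed.

Lemma psum_shift (k t : nat) :
  psum (k + t) = psum k + \sum_(j < t) mu (inZp (j + k)).
Proof.
elim: t => [|t IHt]; first by rewrite addn0 big_ord0 addr0.
rewrite addnS /psum big_ord_recr /= -/(psum (k + t)) IHt big_ord_recr /=.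
by rewrite addrA addnC.
Qed.

Lemma psumD_period (t : nat) : psum (t + n) = psum t + psum n.
Proof.
rewrite addnC psum_shift addrC; congr (_ + _); apply: eq_bigr => j _; congr mu.
by apply: val_inj; rewrite /= modnDr.
Qed.

Lemma pos_vec_rotP (k : 'I_n) :
  reflect (forall t, (k < t <= k + n)%N -> psum k < psum t)
          (pos_vec (fun i => mu (i + k))).
Proof.
have prefixE (i : 'I_n) :
    \sum_(j < n | (j <= i)%N) mu (j + k) = psum (k + i.+1) - psum k.
  rewrite psum_shift addrC addKr.
  rewrite (big_ord_widen _ (fun j => mu (inZp (j + k))) (ltn_ord i)).
  by apply: eq_bigr => j _; congr mu; apply: val_inj.
apply: (iffP forallP) => [pos_rot t /andP [kt tkn] | lt_psum i].
- have i_lt : (t - k.+1 < n)%N by lia.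
  have := pos_rot (Ordinal i_lt); rewrite prefixE subr_gt0 /=.
  by have -> : (k + (t - k.+1).+1 = t)%N by lia.
- by rewrite prefixE subr_gt0; apply: lt_psum; have := ltn_ord i; lia.
Qed.

Lemma exists_pos_vec_rot :
  0 < \sum_(i < n) mu i -> exists k : 'I_n, pos_vec (fun i => mu (i + k)).
Proof.
move=> total_gt0.
have psum_n_gt0 : 0 < psum n.
  by rewrite psum_ord //; under eq_bigl do rewrite ltn_ord.
have [k km [minF lastF]] := exists_last_argmin psum m.
exists (Ordinal (km : (k < n)%N)); apply/pos_vec_rotP => t /= /andP [kt tkn].
have [tm | mt] := leqP t m; first by apply: lastF; rewrite kt.
have -> : t = (t - n + n)%N by lia.
have : psum k <= psum (t - n) by apply: minF; lia.
rewrite psumD_period; lra.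
Qed.

Lemma pos_vec_rot_splittable (k : 'I_n) :
  pos_vec mu -> pos_vec (fun i => mu (i + k)) -> k != 0 -> splittable mu.
Proof.
move=> pos_mu /pos_vec_rotP pos_rot k_neq0.
have /pos_vec_rotP pos_rot0 : pos_vec (fun i => mu (i + 0)).
  by rewrite -(eq_pos_vec (f := mu)) // => i; rewrite addr0.
have k_lt_n := ltn_ord k.
have psum0 : psum 0 = 0 by rewrite /psum big_ord0.
have psum_k_gt0 : psum 0 < psum k by apply: pos_rot0; rewrite /= lt0n k_neq0; lia.
have psum_k_lt_n : psum k < psum n by apply: pos_rot; lia.
pose J := [set i : 'I_n | (i < k)%N].
have sJ_J : sJ J mu = psum k.
  by rewrite psum_ord 1?ltnW //; apply: eq_bigl => i; rewrite inE.
have sJ_CJ : sJ J mu + sJ (~: J) mu = psum n.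
  rewrite psum_ord // (bigID (mem J)) /=.
  by congr (_ + _); apply: eq_bigl => i; rewrite ltn_ord ?in_setC.
by exists J; split; lra.
Qed.

End CycleLemma.

Section PermAction.
Variables (R : realFieldType) (n : nat).
Implicit Types (s t : 'S_n) (lam : 'I_n -> R).

Lemma perm_act_mul s t lam : perm_act (s * t) lam =1 perm_act t (perm_act s lam).
Proof. by move=> i; rewrite /perm_act invMg permM. Qed.

Lemma sum_perm_act s lam : \sum_i perm_act s lam i = \sum_i lam i.
Proof.
by rewrite (reindex_inj (@perm_inj _ s)); apply: eq_bigr => i _; rewrite /perm_act permK.
Qed.

Lemma sJ_perm_act s (J : {set 'I_n}) lam : sJ J (perm_act s lam) = sJ (s @^-1: J) lam.
Proof.
rewrite /sJ (reindex_inj (@perm_inj _ s)).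
by apply: eq_big => [i | i _]; rewrite ?inE // /perm_act permK.
Qed.

Lemma splittable_perm_act s lam : splittable (perm_act s lam) -> splittable lam.
Proof. by case=> J; rewrite !sJ_perm_act preimsetC; exists (s @^-1: J). Qed.

End PermAction.

Lemma splittable_partition (R : realFieldType) n (lam : 'I_n -> R) :
  splittable lam ->
  exists I1 I2 : {set 'I_n},
    [/\ I1 != set0, I2 != set0, I1 :&: I2 = set0 & I1 :|: I2 = setT] /\
    0 < sJ I1 lam /\ 0 < sJ I2 lam.
Proof.
case=> J [pos_J pos_CJ]; exists J, (~: J); split=> //; split; rewrite ?setICr ?setUCr //.
- by apply: contraTneq pos_J => ->; rewrite /sJ big_set0 ltxx.
- by apply: contraTneq pos_CJ => ->; rewrite /sJ big_set0 ltxx.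
Qed.

Section LcosetTransversal.
Local Open Scope group_scope.
Variables (gT : finGroupType) (H : {group gT}) (A : {set gT}).

Lemma card_lcoset_transversal :
  (forall x, exists2 a, a \in A & a \in x *: H) ->
  {in A &, forall a b, b \in a *: H -> a = b} ->
  (#|A| * #|H|)%N = #|gT|.
Proof.
move=> meetA uniqA.
have injA : {in A &, injective (fun a => a *: H)}.
  by move=> a b aA bA /= eq_aHbH; apply: uniqA => //; rewrite eq_aHbH lcoset_refl.
have imA : [set a *: H | a in A] = lcosets H [set: gT].
  apply/setP => C; apply/imsetP/lcosetsP => [[a _ ->] | [x _ ->]]; first by exists a.
  by have [a aA a_xH] := meetA x; exists a => //; apply/esym/lcoset_eqP.
by rewrite -cardsT -(Lagrange (subsetT H)) -card_lcosets -imA card_in_imset // mulnC.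
Qed.

End LcosetTransversal.

Section Rotations.
Variable m : nat.
Local Notation n := m.+1.

Definition rot_perm (k : 'I_n) : 'S_n := perm (addIr k).

Lemma rot_permE k i : rot_perm k i = i + k.
Proof. by rewrite permE. Qed.

Lemma rot_permD k l : rot_perm (k + l) = (rot_perm k * rot_perm l)%g.
Proof. by apply/permP => i; rewrite permM !rot_permE addrA. Qed.

Lemma rot_perm0 : rot_perm 0 = 1%g.
Proof. by apply/permP => i; rewrite rot_permE perm1 addr0. Qed.

Lemma rot_perm_inj : injective rot_perm.
Proof. by move=> k l /(congr1 (fun s : 'S_n => s 0)); rewrite !rot_permE !add0r. Qed.

Definition rotations : {set 'S_n} := [set rot_perm k | k : 'I_n].

Lemma group_set_rotations : group_set rotations.
Proof.
apply/group_setP; split; first by rewrite -rot_perm0 imset_f.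
by move=> _ _ /imsetP [k _ ->] /imsetP [l _ ->]; rewrite -rot_permD imset_f.
Qed.

Canonical rotations_group := Group group_set_rotations.

Lemma card_rotations : #|rotations| = n.
Proof. by rewrite card_imset ?card_ord //; exact: rot_perm_inj. Qed.

Lemma perm_act_rot_perm (R : realFieldType) k (mu : 'I_n -> R) :
  perm_act (rot_perm k) mu =1 (fun i => mu (i - k)).
Proof. by move=> i; rewrite /perm_act -{1}[i](subrK k) -(rot_permE k (i - k)) permK. Qed.

End Rotations.

Section GoodArrangements.
Local Open Scope group_scope.
Variables (R : realFieldType) (m : nat) (lam : 'I_m.+1 -> R).

Lemma Sgood_meets_lcosets :
  (0 < \sum_i lam i)%R -> forall t, exists2 s, s \in Sgood lam & s \in t *: rotations m.
Proof.
move=> total_gt0 t.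
have total_t_gt0 : (0 < \sum_i perm_act t lam i)%R by rewrite sum_perm_act.
have [k pos_k] := exists_pos_vec_rot total_t_gt0.
exists (t * rot_perm (- k)); last by rewrite mem_lcoset mulKg imset_f.
rewrite inE (eq_pos_vec (perm_act_mul _ _ _)) (eq_pos_vec (perm_act_rot_perm _ _)).
by under eq_pos_vec do rewrite opprK.
Qed.

Lemma Sgood_lcoset_unique :
  ~ splittable lam -> {in Sgood lam &, forall s t, t \in s *: rotations m -> s = t}.
Proof.
move=> unsplittable s t; rewrite !inE => pos_s pos_t /lcosetP [_ /imsetP [k _ ->] t_def].
subst t.
suff -> : k = 0%R by rewrite rot_perm0 mulg1.
have [// | k_neq0] := eqVneq k 0%R.
case: unsplittable; apply: (splittable_perm_act (s := s)).
apply: (pos_vec_rot_splittable (k := (- k)%R)) => //; last by rewrite oppr_eq0.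
by rewrite -(eq_pos_vec (perm_act_rot_perm _ _)) -(eq_pos_vec (perm_act_mul _ _ _)).
Qed.

End GoodArrangements.

Theorem mainTheorem13 (R : realFieldType) (n : nat) (lam : 'I_n -> R) :
  0 < \sum_(i < n) lam i ->
  ~ (exists I1 I2 : {set 'I_n},
       [/\ I1 != set0, I2 != set0, I1 :&: I2 = set0 & I1 :|: I2 = setT] /\
       0 < sJ I1 lam /\ 0 < sJ I2 lam) ->
  #|Sgood lam| = (n.-1)`!.
Proof.
case: n lam => [|m] lam total_gt0 no_partition.
  by move: total_gt0; rewrite big_ord0 ltxx.
have unsplittable : ~ splittable lam by move/splittable_partition.
have := card_lcoset_transversal (Sgood_meets_lcosets total_gt0)
                                (Sgood_lcoset_unique unsplittable).
by rewrite card_rotations card_Sn factS mulnC => /eqP; rewrite eqn_pmul2l // => /eqP.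
Qed.
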